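(* For every $n\ge1$, $\eta_{0,1,1}(N_{n,n})=1$. For $n\ge2$, \[ \eta_{0,1,1}(N_{n,k})=\begin{cases}\zeta(n)-\eta_{0,1,1}(N_{n-1,1}), & k=1,\\ \zeta(n)+\eta_{0,1,1}(N_{n-1,k-1})-\eta_{0,1,1}(N_{n-1,k}), & 1<k<n.\end{cases} \]
   Context: For a composition $I=(i_1,\dots,i_j)$ and $n\ge1$, $M_I(n)=\sum_{1\le n_1<\cdots<n_j\le n}n_1^{-i_1}\cdots n_j^{-i_j}$. Define $\eta_{0,1,1}(M_I)=\sum_{n=1}^\infty\frac{M_I(n)}{(n+1)(n+2)}$, extended linearly. For $n\ge m\ge1$, $N_{n,m}=\sum_I M_I$, the sum over all compositions $I$ of $n$ with exactly $m$ parts (the sum of monomial symmetric functions over partitions of $n$ with $m$ parts). $\zeta$ is the Riemann zeta function. *)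

From Stdlib Require Import Reals List.
Import ListNotations.
Open Scope R_scope.

Definition lsum (f : nat -> R) (l : list nat) : R :=
  fold_right (fun m acc => f m + acc) 0 l.

(* Mfrom I a n = sum over a < n_1 < ... < n_j <= n of n_1^{-i_1} ... n_j^{-i_j}. *)
Fixpoint Mfrom (I : list nat) (a n : nat) : R :=
  match I with
  | [] => 1
  | i :: I' =>
      lsum (fun m => / (INR m ^ i) * Mfrom I' m n) (List.seq (S a) (n - a))
  end.

Definition M (I : list nat) (n : nat) : R := Mfrom I 0 n.

Fixpoint comps (n m : nat) : list (list nat) :=
  match m with
  | O => match n with O => [[]] | _ => [] end
  | S m' => flat_map (fun p => map (cons p) (comps (n - p) m'))
                     (List.seq 1 n)
  end.

(* N_{n,m}(j) = sum over compositions I of n with m parts of M_I(j). *)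
Definition Nsum (n m : nat) (j : nat) : R :=
  fold_right (fun I acc => M I j + acc) 0 (comps n m).

Definition eta011_is (f : nat -> R) (l : R) : Prop :=
  infinite_sum (fun j => f (S j) / (INR (S j + 1) * INR (S j + 2))) l.

Definition zeta_is (s : nat) (l : R) : Prop :=
  infinite_sum (fun k => / (INR (S k) ^ s)) l.

(* For [0 <= x < 1] the generating function [sum_s N_{s+k,k}(J) x^s] is the elementary
   symmetric polynomial [e_k] of the numbers [1/(m - x)], [1 <= m <= J].  Let [W_k(x)] be
   [eta_{0,1,1}] of these polynomials.  Summation by parts and the partial fraction
   [(1 + x)/((j + 1)(j - x)) = x/(j (j - x)) - 1/(j + 1) + 1/j] relate [W_{k+1}] to [W_k] and to
   [Phi_k = lim_L sum_{j <= L} e_k(j - 1)/(j (j - x))].  Telescoping the products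
   [prod_{i <= m} (i - x)/(N + i - x)] shows [Phi_k(x) = sum_m 1/(m^(k+1) (m - x))], which is
   [Z_k(x) = sum_t zeta(k + 2 + t) x^t].  Hence [(1 + x) W_1 - 1 = x Z_0] and
   [(1 + x) W_(k+2) - W_(k+1) = x Z_(k+1)] on [(0, 1/2]]; all coefficients are nonnegative, so
   monotone convergence identifies both sides as power series, and comparing coefficients gives
   the recurrences, whose constant terms give [eta_{0,1,1}(N_{n,n}) = 1]. *)

From Stdlib Require Import Reals Lra Lia List.
Import ListNotations.
Open Scope R_scope.

Definition rsum {A : Type} (f : A -> R) (l : list A) : R :=
  fold_right (fun a acc => f a + acc) 0 l.

Lemma rsum_cons {A} (f : A -> R) a l : rsum f (a :: l) = f a + rsum f l.
Proof. reflexivity. Qed.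

Lemma rsum_app {A} (f : A -> R) l1 l2 : rsum f (l1 ++ l2) = rsum f l1 + rsum f l2.
Proof. induction l1 as [|a l1 IH]; simpl; [ring | rewrite IH; ring]. Qed.

Lemma rsum_ext {A} (f h : A -> R) l :
  (forall a, In a l -> f a = h a) -> rsum f l = rsum h l.
Proof.
  induction l as [|a l IH]; intros E; simpl; [reflexivity|].
  rewrite E, IH by auto with datatypes. reflexivity.
Qed.

Lemma rsum_add {A} (f h : A -> R) l : rsum (fun a => f a + h a) l = rsum f l + rsum h l.
Proof. induction l as [|a l IH]; simpl; [ring | rewrite IH; ring]. Qed.

Lemma rsum_scal {A} c (f : A -> R) l : rsum (fun a => c * f a) l = c * rsum f l.
Proof. induction l as [|a l IH]; simpl; [ring | rewrite IH; ring]. Qed.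

Lemma rsum_zero {A} (l : list A) : rsum (fun _ => 0) l = 0.
Proof. induction l as [|a l IH]; simpl; [ring | rewrite IH; ring]. Qed.

Lemma rsum_map {A B} (f : B -> R) (h : A -> B) l : rsum f (map h l) = rsum (fun a => f (h a)) l.
Proof. induction l as [|a l IH]; simpl; [ring | rewrite IH; ring]. Qed.

Lemma rsum_flat_map {A B} (f : B -> R) (h : A -> list B) l :
  rsum f (flat_map h l) = rsum (fun a => rsum f (h a)) l.
Proof. induction l as [|a l IH]; simpl; [reflexivity | rewrite rsum_app, IH; reflexivity]. Qed.

Lemma rsum_comm {A B} (F : A -> B -> R) l1 l2 :
  rsum (fun a => rsum (F a) l2) l1 = rsum (fun b => rsum (fun a => F a b) l1) l2.
Proof.
  induction l1 as [|a l1 IH]; simpl; [now rewrite rsum_zero|].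
  rewrite IH, <- rsum_add. reflexivity.
Qed.

Lemma rsum_nonneg {A} (f : A -> R) l : (forall a, In a l -> 0 <= f a) -> 0 <= rsum f l.
Proof.
  induction l as [|a l IH]; intros H; simpl; [lra|].
  assert (0 <= f a) by auto with datatypes. assert (0 <= rsum f l) by auto with datatypes. lra.
Qed.

Definition Nfrom (n k a J : nat) : R := rsum (fun I => Mfrom I a J) (comps n k).

Lemma Nfrom_succ w k a J :
  Nfrom w (S k) a J =
  rsum (fun p => rsum (fun m => / INR m ^ p * Nfrom (w - p) k m J) (seq (S a) (J - a)))
       (seq 1 w).
Proof.
  unfold Nfrom. simpl comps. rewrite rsum_flat_map. apply rsum_ext. intros p _.
  rewrite rsum_map. simpl Mfrom. change lsum with (@rsum nat).
  rewrite rsum_comm. apply rsum_ext. intros m _. apply rsum_scal.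
Qed.

Lemma comps_small k : forall w, (w < k)%nat -> comps w k = [].
Proof.
  induction k as [|k IH]; intros w Hw; [lia|]. simpl.
  assert (Hnil : forall p, In p (seq 1 w) -> comps (w - p) k = [])
    by (intros p Hp; apply in_seq in Hp; apply IH; lia).
  induction (seq 1 w) as [|p l IHl]; [reflexivity|]. simpl.
  rewrite Hnil by now left. apply IHl. intros q Hq. apply Hnil. now right.
Qed.

Lemma Nfrom_small w k a J : (w < k)%nat -> Nfrom w k a J = 0.
Proof. intros H. unfold Nfrom. now rewrite comps_small. Qed.

Lemma Nfrom_0 w a J : Nfrom w 0 a J = if Nat.eqb w 0 then 1 else 0.
Proof. destruct w; unfold Nfrom, rsum; simpl; ring. Qed.

Lemma Mfrom_nonneg I : forall a J, 0 <= Mfrom I a J.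
Proof.
  induction I as [|i I IH]; intros a J; simpl; [lra|]. apply rsum_nonneg. intros m Hm.
  apply in_seq in Hm. apply Rmult_le_pos; [|apply IH].
  left. apply Rinv_0_lt_compat, pow_lt, lt_0_INR. lia.
Qed.

Lemma Nfrom_nonneg w k a J : 0 <= Nfrom w k a J.
Proof. apply rsum_nonneg. intros; apply Mfrom_nonneg. Qed.

Lemma Un_cv_const c : Un_cv (fun _ => c) c.
Proof. intros e He. exists 0%nat. intros. unfold Rdist. rewrite Rminus_diag, Rabs_R0. lra. Qed.

Lemma Un_cv_S_iff u l : Un_cv (fun n => u (S n)) l <-> Un_cv u l.
Proof.
  split; intros H.
  - apply (CV_shift _ 1). apply (Un_cv_ext (fun n => u (S n))); [intros n; f_equal; lia | exact H].
  - apply (Un_cv_ext (fun n => u (n + 1)%nat)); [intros n; f_equal; lia | exact (CV_shift' _ 1 _ H)].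
Qed.

Lemma Un_cv_squeeze0 u v N0 :
  (forall n, (N0 <= n)%nat -> 0 <= u n <= v n) -> Un_cv v 0 -> Un_cv u 0.
Proof.
  intros H Hv e He. destruct (Hv e He) as [N HN]. exists (max N N0). intros n Hn.
  specialize (HN n ltac:(lia)). specialize (H n ltac:(lia)). unfold Rdist in *.
  rewrite Rminus_0_r in *. rewrite Rabs_right in * by lra. lra.
Qed.

Lemma Un_cv_inv_succ : Un_cv (fun n => / INR (S n)) 0.
Proof.
  apply (Un_cv_ext (fun n => RinvN n)); [| apply RinvN_cv].
  intros n. unfold RinvN. simpl pos. now rewrite <- S_INR.
Qed.

Lemma Un_cv_bounded_growing u B : Un_growing u -> (forall n, u n <= B) -> {l | Un_cv u l}.
Proof. intros H1 H2. apply growing_cv; auto. exists B. intros y [n ->]. auto. Qed.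

Lemma infinite_sum_ext a b l : (forall s, a s = b s) -> infinite_sum a l -> infinite_sum b l.
Proof. intros E H. apply (Un_cv_ext (fun N => sum_f_R0 a N)); auto. intros; apply sum_eq; auto. Qed.

Lemma infinite_sum_add a b la lb :
  infinite_sum a la -> infinite_sum b lb -> infinite_sum (fun s => a s + b s) (la + lb).
Proof.
  intros Ha Hb. apply (Un_cv_ext (fun N => sum_f_R0 a N + sum_f_R0 b N)).
  - intros; now rewrite plus_sum.
  - now apply CV_plus.
Qed.

Lemma infinite_sum_scal c a la : infinite_sum a la -> infinite_sum (fun s => c * a s) (c * la).
Proof.
  intros Ha. apply (Un_cv_ext (fun N => c * sum_f_R0 a N)).
  - intros; rewrite scal_sum. apply sum_eq; intros; ring.
  - apply CV_mult; [apply Un_cv_const | exact Ha].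
Qed.

Lemma infinite_sum_nonneg a l : (forall s, 0 <= a s) -> infinite_sum a l -> 0 <= l.
Proof.
  intros Ha H. eapply Rle_cv_lim; [| apply Un_cv_const | exact H].
  intros; now apply cond_pos_sum.
Qed.

Lemma infinite_sum_term_le a l : (forall s, 0 <= a s) -> infinite_sum a l -> forall N, a N <= l.
Proof.
  intros Ha H N. apply Rle_trans with (sum_f_R0 a N); [|now apply sum_incr].
  destruct N; simpl; [lra|]. assert (0 <= sum_f_R0 a N) by now apply cond_pos_sum. lra.
Qed.

Lemma infinite_sum_bounded a B :
  (forall s, 0 <= a s) -> (forall N, sum_f_R0 a N <= B) -> {l | infinite_sum a l}.
Proof.
  intros Ha HB. apply (Un_cv_bounded_growing (fun N => sum_f_R0 a N) B); [|exact HB].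
  intros n. simpl. specialize (Ha (S n)). lra.
Qed.

Lemma sum_f_R0_succ_l f N : sum_f_R0 f (S N) = f 0%nat + sum_f_R0 (fun i => f (S i)) N.
Proof. induction N; simpl in *; [ring | rewrite IHN; ring]. Qed.

Lemma Pser_ext a b x u : (forall s, a s = b s) -> Pser a x u -> Pser b x u.
Proof. intros E. apply infinite_sum_ext. intros s. now rewrite E. Qed.

Lemma Pser_add a b x u v : Pser a x u -> Pser b x v -> Pser (fun s => a s + b s) x (u + v).
Proof.
  intros Ha Hb. eapply infinite_sum_ext; [| exact (infinite_sum_add _ _ _ _ Ha Hb)].
  intros; simpl; ring.
Qed.

Lemma Pser_scal c a x u : Pser a x u -> Pser (fun s => c * a s) x (c * u).
Proof.
  intros H. eapply infinite_sum_ext; [| exact (infinite_sum_scal c _ _ H)]. intros; simpl; ring.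
Qed.

Lemma Pser_zero x : Pser (fun _ => 0) x 0.
Proof.
  apply (Un_cv_ext (fun _ => 0)); [| apply Un_cv_const].
  intros n; induction n; simpl; lra.
Qed.

Lemma Pser_rsum {A} (c : A -> nat -> R) (v : A -> R) x l :
  (forall a, In a l -> Pser (c a) x (v a)) ->
  Pser (fun s => rsum (fun a => c a s) l) x (rsum v l).
Proof.
  induction l as [|a l IH]; intros H; simpl.
  - apply Pser_zero.
  - apply Pser_add; auto with datatypes.
Qed.

Lemma Pser_sum_f_R0 (c : nat -> nat -> R) (v : nat -> R) x M :
  (forall m, Pser (c m) x (v m)) -> Pser (fun s => sum_f_R0 (fun m => c m s) M) x (sum_f_R0 v M).
Proof. intros H. induction M; simpl; auto. now apply Pser_add. Qed.

Definition delta0 (s : nat) : R := if Nat.eqb s 0 then 1 else 0.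

Lemma Pser_delta0 x : Pser delta0 x 1.
Proof.
  apply (Un_cv_ext (fun _ => 1)); [| apply Un_cv_const].
  intros n; induction n; simpl; [unfold delta0; simpl; ring | rewrite <- IHn; unfold delta0; simpl; ring].
Qed.

(* [shift f] is the coefficient sequence of [x * F(x)]. *)
Definition shift (f : nat -> R) (s : nat) : R := match s with 0 => 0 | S t => f t end.

Lemma Pser_shift a x l : Pser a x l -> Pser (shift a) x (x * l).
Proof.
  intros H. apply Un_cv_S_iff.
  apply (Un_cv_ext (fun N => x * sum_f_R0 (fun s => a s * x ^ s) N)).
  - intros N. rewrite sum_f_R0_succ_l, scal_sum. simpl. rewrite Rmult_0_l, Rplus_0_l.
    apply sum_eq. intros. ring.
  - apply CV_mult; [apply Un_cv_const | exact H].
Qed.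

(* Coefficients of [C(x) / (n - x)] when [C] has coefficients [c]. *)
Fixpoint div_linear (n : R) (c : nat -> R) (s : nat) : R :=
  match s with 0 => c 0%nat / n | S s' => (c (S s') + div_linear n c s') / n end.

Lemma div_linear_nonneg n c : 0 < n -> (forall s, 0 <= c s) -> forall s, 0 <= div_linear n c s.
Proof.
  intros Hn Hc s. assert (0 <= / n) by (left; now apply Rinv_0_lt_compat).
  induction s; simpl; unfold Rdiv; apply Rmult_le_pos; auto.
  specialize (Hc (S s)). lra.
Qed.

Lemma div_linear_partial n c x N : n <> 0 ->
  (n - x) * sum_f_R0 (fun s => div_linear n c s * x ^ s) N =
  sum_f_R0 (fun s => c s * x ^ s) N - div_linear n c N * x ^ S N.
Proof.
  intros Hn. induction N; simpl.
  - field. exact Hn.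
  - rewrite Rmult_plus_distr_l, IHN. simpl. field. exact Hn.
Qed.

Lemma Pser_div_linear n c x v : 0 <= x -> x < n -> (forall s, 0 <= c s) -> Pser c x v ->
  Pser (div_linear n c) x (v / (n - x)).
Proof.
  intros Hx Hxn Hc Hv. unfold Pser in *.
  set (D := fun N => sum_f_R0 (fun s => div_linear n c s * x ^ s) N).
  assert (Hd : forall s, 0 <= div_linear n c s * x ^ s)
    by (intros; apply Rmult_le_pos; [apply div_linear_nonneg; auto; lra | now apply pow_le]).
  assert (HD : forall N, D N = (sum_f_R0 (fun s => c s * x ^ s) N - div_linear n c N * x ^ S N) / (n - x))
    by (intros N; unfold D; rewrite <- div_linear_partial by lra; field; lra).
  assert (HDle : forall N, D N <= v / (n - x)).
  { intros N. rewrite HD. unfold Rdiv. apply Rmult_le_compat_r; [left; apply Rinv_0_lt_compat; lra|].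
    assert (sum_f_R0 (fun s => c s * x ^ s) N <= v)
      by (apply sum_incr; auto; intros; apply Rmult_le_pos; auto; now apply pow_le).
    specialize (Hd N). assert (0 <= div_linear n c N * x ^ N * x) by (apply Rmult_le_pos; lra).
    replace (div_linear n c N * x ^ S N) with (div_linear n c N * x ^ N * x) by (simpl; ring).
    lra. }
  assert (HDg : Un_growing D) by (intros N; unfold D; rewrite tech5; specialize (Hd (S N)); lra).
  destruct (Un_cv_bounded_growing D _ HDg HDle) as [l Hl].
  (* the boundary term is [x] times the increment of the convergent sequence [D] *)
  assert (Htail : Un_cv (fun N => div_linear n c N * x ^ S N) 0).
  { apply Un_cv_S_iff. apply (Un_cv_ext (fun N => x * (D (S N) - D N))).
    - intros N. unfold D. simpl. ring.
    - replace 0 with (x * (l - l)) by ring. apply CV_mult; [apply Un_cv_const|].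
      apply CV_minus; [now apply Un_cv_S_iff | exact Hl]. }
  apply (Un_cv_ext (fun N => (sum_f_R0 (fun s => c s * x ^ s) N - div_linear n c N * x ^ S N) * / (n - x))).
  - intros N. now rewrite HD.
  - replace (v / (n - x)) with ((v - 0) * / (n - x)) by (unfold Rdiv; ring).
    apply CV_mult; [apply CV_minus; auto | apply Un_cv_const].
Qed.

(** * The generating function of [N_{n,k}] *)

Definition invd (x : R) (n : nat) : R := / (INR n - x).

(* [esym_from x k a J] is the elementary symmetric polynomial [e_k] evaluated at
   [invd x m] for [a < m <= J]; [esym x k J] takes all [1 <= m <= J]. *)
Fixpoint esym_from (x : R) (k a J : nat) : R :=
  match k with
  | 0 => 1
  | S k' => rsum (fun m => invd x m * esym_from x k' m J) (seq (S a) (J - a))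
  end.

Definition esym (x : R) (k J : nat) : R := esym_from x k 0 J.

Lemma invd_pos x n : x < 1 -> (1 <= n)%nat -> 0 < invd x n.
Proof.
  intros. unfold invd. apply Rinv_0_lt_compat.
  assert (1 <= INR n) by (apply (le_INR 1); auto). lra.
Qed.

Lemma esym_from_nonneg x k : x < 1 -> forall a J, 0 <= esym_from x k a J.
Proof.
  intros Hx. induction k as [|k IH]; intros; simpl; [lra|]. apply rsum_nonneg. intros m Hm.
  apply in_seq in Hm. apply Rmult_le_pos; [left; apply invd_pos; auto; lia | auto].
Qed.

Lemma esym_nonneg x k J : x < 1 -> 0 <= esym x k J.
Proof. intros; now apply esym_from_nonneg. Qed.

Lemma esym_from_succ x k a J :
  esym_from x (S k) a J = rsum (fun m => invd x m * esym_from x k m J) (seq (S a) (J - a)).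
Proof. reflexivity. Qed.

Lemma esym_from_snoc x k : forall a J, (a <= J)%nat ->
  esym_from x (S k) a (S J) = esym_from x (S k) a J + invd x (S J) * esym_from x k a J.
Proof.
  induction k as [|k IH]; intros a J Ha; rewrite !esym_from_succ;
    replace (S J - a)%nat with (S (J - a)) by lia; rewrite seq_S, rsum_app;
    replace (S a + (J - a))%nat with (S J) by lia.
  - simpl. ring.
  - change (rsum ?f [S J]) with (f (S J) + 0). cbv beta.
    rewrite esym_from_succ. replace (S J - S J)%nat with 0%nat by lia. simpl seq.
    rewrite (rsum_ext _ (fun m => invd x m * esym_from x (S k) m J
                                  + invd x (S J) * (invd x m * esym_from x k m J))).
    + rewrite rsum_add, rsum_scal, <- !esym_from_succ. simpl. ring.
    + intros m Hm. apply in_seq in Hm. rewrite IH by lia. ring.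
Qed.

Lemma esym_0 x J : esym x 0 J = 1.
Proof. reflexivity. Qed.

Lemma esym_succ_0 x k : esym x (S k) 0 = 0.
Proof. reflexivity. Qed.

Lemma esym_succ x k J : esym x (S k) (S J) = esym x (S k) J + invd x (S J) * esym x k J.
Proof. apply esym_from_snoc. lia. Qed.

Definition first_part_sum (k m J w : nat) : R :=
  rsum (fun p => / INR m ^ p * Nfrom (w - p) k m J) (seq 1 w).

Lemma first_part_sum_succ k m J w : (1 <= m)%nat ->
  first_part_sum k m J (S w) = (Nfrom w k m J + first_part_sum k m J w) / INR m.
Proof.
  intros Hm. assert (INR m <> 0) by (apply not_0_INR; lia).
  unfold first_part_sum. change (seq 1 (S w)) with (1%nat :: seq 2 w).
  rewrite rsum_cons, <- seq_shift, rsum_map. replace (S w - 1)%nat with w by lia.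
  rewrite (rsum_ext _ (fun p => / INR m * (/ INR m ^ p * Nfrom (w - p) k m J)))
    by (intros p _; simpl pow; rewrite Rinv_mult; simpl; ring).
  rewrite rsum_scal. simpl pow. field. exact H.
Qed.

Lemma first_part_sum_div_linear k m J s : (1 <= m)%nat ->
  first_part_sum k m J (S (s + k)) = div_linear (INR m) (fun t => Nfrom (t + k) k m J) s.
Proof.
  intros Hm. induction s as [|s IH]; rewrite first_part_sum_succ by exact Hm; simpl.
  - replace (first_part_sum k m J k) with 0; [field; apply not_0_INR; lia|].
    unfold first_part_sum. rewrite (rsum_ext _ (fun _ => 0)); [now rewrite rsum_zero|].
    intros p Hp. apply in_seq in Hp. rewrite Nfrom_small by lia. ring.
  - now rewrite IH.
Qed.

Lemma Pser_Nfrom x k : 0 <= x < 1 ->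
  forall a J, Pser (fun s => Nfrom (s + k) k a J) x (esym_from x k a J).
Proof.
  intros Hx. induction k as [|k IH]; intros a J.
  - eapply Pser_ext; [| apply Pser_delta0]. intros s.
    rewrite Nfrom_0, Nat.add_0_r. reflexivity.
  - rewrite esym_from_succ.
    apply Pser_ext with (fun s => rsum (fun m => div_linear (INR m) (fun t => Nfrom (t + k) k m J) s)
                                      (seq (S a) (J - a))).
    + intros s. rewrite Nfrom_succ, rsum_comm. apply rsum_ext. intros m Hm.
      apply in_seq in Hm. rewrite <- first_part_sum_div_linear by lia.
      now replace (S (s + k)) with (s + S k)%nat by lia.
    + apply Pser_rsum. intros m Hm. apply in_seq in Hm.
      assert (1 <= INR m) by (apply (le_INR 1); lia).
      replace (invd x m * esym_from x k m J) with (esym_from x k m J / (INR m - x))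
        by (unfold invd, Rdiv; ring).
      apply Pser_div_linear; [lra | lra | intros; apply Nfrom_nonneg | apply IH].
Qed.

Lemma Pser_Nsum x k J : 0 <= x < 1 -> Pser (fun s => Nsum (s + k) k J) x (esym x k J).
Proof. intros Hx. exact (Pser_Nfrom x k Hx 0 J). Qed.

(** * The duality limit *)

Section Duality.

Variable x : R.
Hypothesis Hx : 0 <= x <= 1/2.

Lemma INR_sub_x_pos n : (1 <= n)%nat -> 0 < INR n - x.
Proof. intros. assert (1 <= INR n) by (apply (le_INR 1); auto). lra. Qed.

Fixpoint ratio (N m : nat) : R :=
  match m with 0 => 1 | S m' => ratio N m' * (INR m - x) / (INR (N + m) - x) end.

Lemma ratio_succ N m : ratio N (S m) = ratio N m * (INR (S m) - x) / (INR (N + S m) - x).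
Proof. reflexivity. Qed.

Lemma ratio_0_l m : ratio 0 m = 1.
Proof.
  induction m as [|m IH]; [reflexivity|]. rewrite ratio_succ, IH, Nat.add_0_l.
  field. apply Rgt_not_eq, INR_sub_x_pos. lia.
Qed.

Lemma ratio_pos N m : 0 < ratio N m.
Proof.
  induction m as [|m IH]; [simpl; lra|]. rewrite ratio_succ. unfold Rdiv.
  apply Rmult_lt_0_compat; [apply Rmult_lt_0_compat; auto|];
    [| apply Rinv_0_lt_compat]; apply INR_sub_x_pos; lia.
Qed.

Lemma ratio_shift N m : ratio N m = ratio (S N) m * (1 + INR m * invd x (S N)).
Proof.
  induction m as [|m IH]; [simpl; ring|]. rewrite !ratio_succ, IH. unfold invd.
  pose proof (INR_sub_x_pos (S N) ltac:(lia)). pose proof (INR_sub_x_pos (N + S m) ltac:(lia)).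
  pose proof (INR_sub_x_pos (S N + S m) ltac:(lia)).
  rewrite !plus_INR, !S_INR in *. field. repeat split; lra.
Qed.

Lemma ratio_step N m : ratio N m - ratio N (S m) = INR N * (invd x (S m) * ratio N (S m)).
Proof.
  rewrite ratio_succ. unfold invd. pose proof (ratio_pos N m).
  pose proof (INR_sub_x_pos (S m) ltac:(lia)). pose proof (INR_sub_x_pos (N + S m) ltac:(lia)).
  rewrite !plus_INR, !S_INR in *. field. repeat split; lra.
Qed.

Lemma ratio_le N m : (1 <= N)%nat -> ratio N m <= / INR (S m).
Proof.
  intros HN. induction m as [|m IH]; [simpl; lra|].
  rewrite ratio_succ. pose proof (ratio_pos N m).
  assert (1 <= INR N) by (apply (le_INR 1); auto).
  assert (1 <= INR (S m)) by (apply (le_INR 1); lia).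
  rewrite plus_INR, (S_INR (S m)) in *.
  apply Rle_trans with (/ INR (S m) * ((INR (S m) - x) / (INR N + INR (S m) - x))).
  - unfold Rdiv. rewrite Rmult_assoc. apply Rmult_le_compat_r; auto.
    apply Rmult_le_pos; [lra | left; apply Rinv_0_lt_compat; lra].
  - apply Rmult_le_reg_l with ((INR (S m) + 1) * INR (S m) * (INR N + INR (S m) - x)).
    { apply Rmult_lt_0_compat; [apply Rmult_lt_0_compat|]; lra. }
    replace ((INR (S m) + 1) * INR (S m) * (INR N + INR (S m) - x) *
             (/ INR (S m) * ((INR (S m) - x) / (INR N + INR (S m) - x))))
      with ((INR (S m) + 1) * (INR (S m) - x)) by (field; lra).
    replace ((INR (S m) + 1) * INR (S m) * (INR N + INR (S m) - x) * / (INR (S m) + 1))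
      with (INR (S m) * (INR N + INR (S m) - x)) by (field; lra).
    nra.
Qed.

(* The partial sums telescope by [ratio_step], and [ratio N m -> 0] by [ratio_le]. *)
Lemma kern_series N : (1 <= N)%nat ->
  infinite_sum (fun m => invd x (S m) * ratio N (S m)) (/ INR N).
Proof.
  intros HN. assert (INR N <> 0) by (apply not_0_INR; lia).
  assert (Hsum : forall M, sum_f_R0 (fun m => invd x (S m) * ratio N (S m)) M
                           = (1 - ratio N (S M)) / INR N).
  { induction M as [|M IH].
    - change (sum_f_R0 ?f 0) with (f 0%nat). pose proof (ratio_step N 0) as E.
      apply (Rmult_eq_reg_l (INR N)); [|exact H]. rewrite <- E. change (ratio N 0) with 1.
      field. exact H.
    - rewrite tech5, IH. pose proof (ratio_step N (S M)) as E.
      apply (Rmult_eq_reg_l (INR N)); [|exact H]. rewrite Rmult_plus_distr_l, <- E. field. exact H. }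
  replace (/ INR N) with ((1 - 0) * / INR N) by ring.
  apply (Un_cv_ext (fun M => (1 - ratio N (S M)) * / INR N)); [intros; now rewrite Hsum|].
  apply CV_mult; [|apply Un_cv_const]. apply CV_minus; [apply Un_cv_const|].
  apply (Un_cv_squeeze0 _ (fun n => / INR (S n)) 0); [|exact Un_cv_inv_succ].
  intros n _. split; [left; apply ratio_pos|].
  apply Rle_trans with (/ INR (S (S n))); [now apply ratio_le|].
  apply Rinv_le_contravar; [apply lt_0_INR; lia | apply le_INR; lia].
Qed.

Fixpoint err (k J m : nat) : R :=
  match k with 0 => / INR m | S k' => (err k' J m + esym x (S k') J) / INR m end.

Lemma err_step k J m : (1 <= m)%nat ->
  ratio J m * err k J m - ratio (S J) m * err k (S J) m
  = invd x (S J) * ratio (S J) m * esym x k J.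
Proof.
  intros Hm. assert (INR m <> 0) by (apply not_0_INR; lia).
  assert (D : ratio J m - ratio (S J) m = INR m * invd x (S J) * ratio (S J) m)
    by (rewrite ratio_shift at 1; ring).
  induction k as [|k IH]; simpl err.
  - apply (Rmult_eq_reg_l (INR m)); [|exact H]. rewrite esym_0.
    replace (INR m * (ratio J m * / INR m - ratio (S J) m * / INR m))
      with (ratio J m - ratio (S J) m) by (field; exact H).
    rewrite D. ring.
  - rewrite esym_succ. apply (Rmult_eq_reg_l (INR m)); [|exact H].
    replace (INR m * (ratio J m * ((err k J m + esym x (S k) J) / INR m) -
             ratio (S J) m * ((err k (S J) m + (esym x (S k) J + invd x (S J) * esym x k J)) / INR m)))
      with (ratio J m * err k J m - ratio (S J) m * err k (S J) m
            + (ratio J m - ratio (S J) m) * esym x (S k) J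
            - ratio (S J) m * invd x (S J) * esym x k J) by (field; exact H).
    rewrite IH, D. ring.
Qed.

Lemma err_0_l k m : (1 <= m)%nat -> err k 0 m = / INR m ^ S k.
Proof.
  intros Hm. assert (INR m <> 0) by (apply not_0_INR; lia).
  induction k as [|k IH]; simpl err.
  - simpl. field. exact H.
  - rewrite IH, esym_succ_0. simpl pow. field. split; [now apply pow_nonzero | exact H].
Qed.

Fixpoint wsum (k J m : nat) : R :=
  match J with 0 => 0 | S J' => wsum k J' m + invd x (S J') * ratio (S J') m * esym x k J' end.

Lemma wsum_closed k J m : (1 <= m)%nat -> wsum k J m = / INR m ^ S k - ratio J m * err k J m.
Proof.
  intros Hm. induction J as [|J IH]; simpl wsum.
  - rewrite err_0_l, ratio_0_l by exact Hm. ring.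
  - rewrite IH. pose proof (err_step k J m Hm). lra.
Qed.

Fixpoint phi (k L : nat) : R :=
  match L with 0 => 0 | S L' => phi k L' + invd x (S L') * esym x k L' / INR (S L') end.

Lemma phi_series k L : infinite_sum (fun m => invd x (S m) * wsum k L (S m)) (phi k L).
Proof.
  induction L as [|L IH]; cbn [wsum phi].
  - eapply infinite_sum_ext; [| exact (Pser_zero 0)]. intros; simpl; ring.
  - eapply infinite_sum_ext;
      [| apply infinite_sum_add;
         [exact IH | apply (infinite_sum_scal (invd x (S L) * esym x k L)), kern_series; lia]].
    intros m. cbv beta. ring.
Qed.

Fixpoint errsum (k L : nat) : R :=
  match k with 0 => 1 | S k' => errsum k' L + esym x (S k') L end.

Lemma err_bound k L m : (1 <= m)%nat -> 0 <= err k L m <= errsum k L.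
Proof.
  intros Hm. assert (1 <= INR m) by (apply (le_INR 1); auto).
  assert (Hinv : 0 < / INR m <= 1)
    by (split; [apply Rinv_0_lt_compat; lra | rewrite <- Rinv_1; apply Rinv_le_contravar; lra]).
  induction k as [|k IH]; simpl err; simpl errsum; [lra|].
  pose proof (esym_nonneg x (S k) L ltac:(lra)). unfold Rdiv. split; [apply Rmult_le_pos; lra|].
  assert ((err k L m + esym x (S k) L) * / INR m <= err k L m + esym x (S k) L) by
    (rewrite <- (Rmult_1_r (err k L m + esym x (S k) L)) at 2; apply Rmult_le_compat_l; lra).
  lra.
Qed.

Lemma err_series k L : (1 <= L)%nat -> exists e,
  infinite_sum (fun m => invd x (S m) * ratio L (S m) * err k L (S m)) e /\
  0 <= e <= errsum k L / INR L.
Proof.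
  intros HL. assert (0 < INR L) by (apply lt_0_INR; lia).
  assert (Hw : forall m, 0 < invd x (S m) * ratio L (S m))
    by (intros; apply Rmult_lt_0_compat; [apply invd_pos; [lra | lia] | apply ratio_pos]).
  assert (Hnn : forall m, 0 <= invd x (S m) * ratio L (S m) * err k L (S m))
    by (intros; apply Rmult_le_pos; [left; apply Hw | apply err_bound; lia]).
  assert (Hb : forall N, sum_f_R0 (fun m => invd x (S m) * ratio L (S m) * err k L (S m)) N
                         <= errsum k L / INR L).
  { intros N. apply Rle_trans with (sum_f_R0 (fun m => invd x (S m) * ratio L (S m)) N * errsum k L).
    - rewrite Rmult_comm, scal_sum. apply sum_Rle. intros.
      apply Rmult_le_compat_l; [left; apply Hw | apply err_bound; lia].
    - unfold Rdiv. rewrite Rmult_comm. apply Rmult_le_compat_l.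
      + pose proof (err_bound k L 1 ltac:(lia)). lra.
      + apply sum_incr; [now apply kern_series | intros; left; apply Hw]. }
  destruct (infinite_sum_bounded _ _ Hnn Hb) as [e He]. exists e. split; [exact He|]. split.
  - exact (infinite_sum_nonneg _ _ Hnn He).
  - eapply Rle_cv_lim; [exact Hb | exact He | apply Un_cv_const].
Qed.

(* Summing [wsum k L] against [invd x m] gives [phi k L] after exchanging the sums
   ([phi_series]), while [wsum_closed] evaluates it termwise; the discrepancy is the
   [err]-weighted mass, at most [errsum k L / L]. *)
Lemma phi_bound k : exists z,
  infinite_sum (fun m => invd x (S m) / INR (S m) ^ S k) z /\
  forall L, (1 <= L)%nat -> z - errsum k L / INR L <= phi k L <= z.
Proof.
  assert (Hs : forall L, (1 <= L)%nat -> exists e,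
     infinite_sum (fun m => invd x (S m) / INR (S m) ^ S k) (phi k L + e) /\
     0 <= e <= errsum k L / INR L).
  { intros L HL. destruct (err_series k L HL) as [e [He Hb]]. exists e. split; [|exact Hb].
    eapply infinite_sum_ext; [| exact (infinite_sum_add _ _ _ _ (phi_series k L) He)].
    intros m. cbv beta. rewrite wsum_closed by lia. unfold Rdiv. ring. }
  destruct (Hs 1%nat (le_n _)) as [e1 [He1 _]]. exists (phi k 1 + e1). split; [exact He1|].
  intros L HL. destruct (Hs L HL) as [e [He Hb]].
  rewrite (uniqueness_sum _ _ _ He1 He). lra.
Qed.

Fixpoint half_prod (J : nat) : R :=
  match J with 0 => 1 | S J' => half_prod J' * (1 + invd x (S J') / 2) end.

Lemma half_prod_ge1 J : 1 <= half_prod J.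
Proof.
  induction J as [|J IH]; simpl; [lra|]. pose proof (invd_pos x (S J) ltac:(lra) ltac:(lia)).
  assert (1 <= 1 + invd x (S J) / 2) by lra. nra.
Qed.

(* [half_prod J] is the generating polynomial [prod (1 + t invd x j)] of the [esym x k J] at [t = 1/2]. *)
Lemma esym_le k J : esym x k J <= 2 ^ k * half_prod J.
Proof.
  revert k. induction J as [|J IH]; intros k.
  - destruct k; [rewrite esym_0; simpl; lra | rewrite esym_succ_0].
    apply Rmult_le_pos; [left; apply pow_lt; lra | simpl; lra].
  - destruct k as [|k].
    + rewrite esym_0. pose proof (half_prod_ge1 (S J)). lra.
    + rewrite esym_succ. pose proof (IH (S k)). pose proof (IH k).
      pose proof (invd_pos x (S J) ltac:(lra) ltac:(lia)).
      change (half_prod (S J)) with (half_prod J * (1 + invd x (S J) / 2)).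
      assert (invd x (S J) * esym x k J <= invd x (S J) * (2 ^ k * half_prod J))
        by (apply Rmult_le_compat_l; lra).
      replace (2 ^ S k * (half_prod J * (1 + invd x (S J) / 2)))
        with (2 ^ S k * half_prod J + invd x (S J) * (2 ^ k * half_prod J)) by (simpl; field).
      lra.
Qed.

Lemma half_prod_sq J : half_prod (S J) ^ 2 <= 4 * INR (S J).
Proof.
  assert (Hle : forall n, (1 <= n)%nat -> invd x n <= / (INR n - 1/2)).
  { intros n Hn. unfold invd. assert (1 <= INR n) by (apply (le_INR 1); auto).
    apply Rinv_le_contravar; lra. }
  induction J as [|J IH].
  - simpl half_prod. pose proof (Hle 1%nat (le_n _)). pose proof (invd_pos x 1 ltac:(lra) (le_n _)).
    simpl INR in *. assert (invd x 1 <= 2) by (apply Rle_trans with (/ (1 - 1/2)); [auto | lra]).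
    nra.
  - change (half_prod (S (S J))) with (half_prod (S J) * (1 + invd x (S (S J)) / 2)).
    pose proof (Hle (S (S J)) ltac:(lia)) as Ht0. pose proof (invd_pos x (S (S J)) ltac:(lra) ltac:(lia)).
    set (t := invd x (S (S J))) in *. set (u := half_prod (S J)) in *.
    rewrite !S_INR in Ht0, IH |- *. rewrite S_INR in Ht0.
    set (j := INR J) in *. assert (0 <= j) by apply pos_INR.
    assert (Ht : t * (2 * j + 3) <= 2).
    { apply Rle_trans with (/ (j + 1 + 1 - 1/2) * (2 * j + 3)).
      - apply Rmult_le_compat_r; lra.
      - right; field; lra. }
    assert (0 <= u) by (pose proof (half_prod_ge1 (S J)); unfold u; lra).
    assert (Hq0 : 0 <= (1 + t/2) * (2*j+3) <= 2*j+4) by (split; nra).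
    assert (Hq : (1 + t/2) ^ 2 * (2*j+3)^2 <= (2*j+4)^2).
    { replace ((1 + t/2) ^ 2 * (2*j+3)^2) with (((1 + t/2) * (2*j+3))^2) by ring.
      apply pow_incr. exact Hq0. }
    assert (Hr : (j + 1) * (2*j+4)^2 <= (j+2) * (2*j+3)^2) by nra.
    assert (Hs : (j+1) * (1 + t/2)^2 <= j + 2).
    { apply Rmult_le_reg_r with ((2*j+3)^2); [nra|].
      assert ((j+1) * ((1 + t/2) ^ 2 * (2*j+3)^2) <= (j+1) * (2*j+4)^2)
        by (apply Rmult_le_compat_l; lra).
      rewrite Rmult_assoc. lra. }
    replace ((u * (1 + t / 2)) ^ 2) with (u^2 * (1 + t/2)^2) by ring.
    assert (0 <= (1 + t/2)^2) by nra.
    apply Rle_trans with (4 * ((j + 1) * (1 + t/2)^2)); [|rewrite ?S_INR; fold j; lra].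
    replace (4 * ((j + 1) * (1 + t/2)^2)) with (4 * (j + 1) * (1 + t/2)^2) by ring.
    apply Rmult_le_compat_r; lra.
Qed.

Lemma esym_div_cv0 k : Un_cv (fun L => esym x k L / INR L) 0.
Proof.
  intros e He. destruct (INR_unbounded (4 ^ S k / (e * e))) as [N HN].
  exists (S N). intros L HL. destruct L as [|L]; [lia|].
  unfold Rdist. rewrite Rminus_0_r. assert (HL0 : 0 < INR (S L)) by (apply lt_0_INR; lia).
  assert (Hr : 0 <= esym x k (S L) / INR (S L))
    by (apply Rmult_le_pos; [apply esym_nonneg; lra | left; apply Rinv_0_lt_compat; auto]).
  rewrite Rabs_right by lra.
  pose proof (esym_le k (S L)). pose proof (half_prod_sq L).
  pose proof (esym_nonneg x k (S L) ltac:(lra)).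
  assert (INR N <= INR (S L)) by (apply le_INR; lia).
  set (r := esym x k (S L)) in *. set (p := half_prod (S L)) in *. set (l := INR (S L)) in *.
  assert (Hpos2 : 0 < 2 ^ k) by (apply pow_lt; lra).
  (* [e_k(L)^2 <= 4^(k+1) L], so [e_k(L) / L] is [O(L^(-1/2))] *)
  assert (Hr2 : r * r <= 4 ^ k * (4 * l)).
  { assert (E : r * r <= (2 ^ k * p) * (2 ^ k * p)) by (apply Rmult_le_compat; lra).
    replace ((2 ^ k * p) * (2 ^ k * p)) with ((2 * 2) ^ k * p ^ 2) in E
      by (rewrite Rpow_mult_distr; ring).
    replace (2 * 2) with 4 in E by ring.
    assert (0 < 4 ^ k) by (apply pow_lt; lra). nra. }
  assert (He2 : 4 ^ S k < l * (e * e)).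
  { apply Rmult_lt_reg_r with (/ (e * e)); [apply Rinv_0_lt_compat; nra|].
    replace (l * (e * e) * / (e * e)) with l by (field; lra). unfold Rdiv in HN. lra. }
  simpl pow in He2.
  assert (Hq : (r / l) * (r / l) < e * e).
  { replace ((r / l) * (r / l)) with (r * r / (l * l)) by (field; lra).
    apply Rmult_lt_reg_r with (l * l); [nra|].
    replace (r * r / (l * l) * (l * l)) with (r * r) by (field; lra). nra. }
  nra.
Qed.

Lemma errsum_div_cv0 k : Un_cv (fun L => errsum k L / INR L) 0.
Proof.
  induction k as [|k IH]; simpl errsum.
  - exact (esym_div_cv0 0).
  - replace 0 with (0 + 0) by ring.
    apply (Un_cv_ext (fun L => errsum k L / INR L + esym x (S k) L / INR L));
      [intros; unfold Rdiv; ring|].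
    apply CV_plus; [exact IH | apply esym_div_cv0].
Qed.

Lemma phi_cv k : exists z,
  infinite_sum (fun m => invd x (S m) / INR (S m) ^ S k) z /\ Un_cv (phi k) z.
Proof.
  destruct (phi_bound k) as [z [Hz Hb]]. exists z. split; [exact Hz|].
  intros e He. destruct (errsum_div_cv0 k e He) as [N HN]. exists (S N). intros L HL.
  specialize (Hb L ltac:(lia)). specialize (HN L ltac:(lia)). unfold Rdist in *.
  rewrite Rminus_0_r in HN. rewrite Rabs_left1 by lra.
  pose proof (RRle_abs (errsum k L / INR L)). lra.
Qed.

(** * Summation by parts *)

Fixpoint eta_partial (k L : nat) : R :=
  match L with
  | 0 => 0
  | S L' => eta_partial k L' + esym x k (S L') / (INR (S L' + 1) * INR (S L' + 2))
  end.

Fixpoint abel_partial (k L : nat) : R :=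
  match L with 0 => 0 | S L' => abel_partial k L' + invd x (S L') * esym x k L' / INR (S L' + 1) end.

(* Abel summation with [1/((j+1)(j+2)) = 1/(j+1) - 1/(j+2)]. *)
Lemma eta_partial_by_parts k L :
  eta_partial (S k) L = abel_partial k L - esym x (S k) L / INR (L + 2).
Proof.
  induction L as [|L IH]; cbn [eta_partial abel_partial].
  - rewrite esym_succ_0. unfold Rdiv. ring.
  - rewrite IH, esym_succ, !plus_INR, !S_INR. simpl INR.
    assert (0 <= INR L) by apply pos_INR. field. lra.
Qed.

Lemma invd_partial_fraction L : (1 + x) * invd x (S L) / INR (S L + 1) =
  x * invd x (S L) / INR (S L) - 1 / INR (S L + 1) + 1 / INR (L + 1).
Proof.
  unfold invd. rewrite !plus_INR, !S_INR. simpl INR. assert (0 <= INR L) by apply pos_INR.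
  field. lra.
Qed.

Lemma abel_partial_succ k L : (1 + x) * abel_partial (S k) L - abel_partial k L
  = x * phi (S k) L - esym x (S k) L / INR (L + 1).
Proof.
  induction L as [|L IH]; cbn [abel_partial phi].
  - rewrite esym_succ_0. unfold Rdiv. ring.
  - rewrite esym_succ. pose proof (invd_partial_fraction L) as E.
    replace ((1 + x) * (abel_partial (S k) L + invd x (S L) * esym x (S k) L / INR (S L + 1)) -
             (abel_partial k L + invd x (S L) * esym x k L / INR (S L + 1)))
      with (((1 + x) * abel_partial (S k) L - abel_partial k L)
            + ((1 + x) * invd x (S L) / INR (S L + 1)) * esym x (S k) L
            - invd x (S L) * esym x k L / INR (S L + 1)) by (unfold Rdiv; ring).
    rewrite IH, E. unfold Rdiv. ring.
Qed.

Lemma abel_partial_0 L : (1 + x) * abel_partial 0 L - 1 = x * phi 0 L - 1 / INR (L + 1).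
Proof.
  induction L as [|L IH]; cbn [abel_partial phi].
  - simpl. field.
  - rewrite !esym_0. pose proof (invd_partial_fraction L) as E.
    replace ((1 + x) * (abel_partial 0 L + invd x (S L) * 1 / INR (S L + 1)) - 1)
      with (((1 + x) * abel_partial 0 L - 1) + (1 + x) * invd x (S L) / INR (S L + 1))
      by (unfold Rdiv; ring).
    rewrite IH, E. replace (S L + 1)%nat with (S (L + 1)) by lia. unfold Rdiv. ring.
Qed.

Lemma esym_div_shift_cv0 k c : (1 <= c)%nat -> Un_cv (fun L => esym x k L / INR (L + c)) 0.
Proof.
  intros Hc. apply (Un_cv_squeeze0 _ (fun L => esym x k L / INR L) 1); [|apply esym_div_cv0].
  intros n Hn. assert (0 < INR n) by (apply lt_0_INR; lia).
  assert (INR n <= INR (n + c)) by (apply le_INR; lia).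
  pose proof (esym_nonneg x k n ltac:(lra)). unfold Rdiv. split.
  - apply Rmult_le_pos; [lra | left; apply Rinv_0_lt_compat; lra].
  - apply Rmult_le_compat_l; [lra | apply Rinv_le_contravar; lra].
Qed.

Lemma eta_partial_1_cv : exists w z,
  infinite_sum (fun m => invd x (S m) / INR (S m) ^ 1) z /\
  Un_cv (eta_partial 1) w /\ (1 + x) * w - 1 = x * z.
Proof.
  destruct (phi_cv 0) as [z [Hz Hphi]].
  exists ((1 + x * z - 0 - (1 + x) * 0) / (1 + x)), z. split; [exact Hz|]. split; [|field; lra].
  apply (Un_cv_ext (fun L => (1 + x * phi 0 L - esym x 0 L / INR (L + 1)
                              - (1 + x) * (esym x 1 L / INR (L + 2))) * / (1 + x))).
  - intros L. rewrite eta_partial_by_parts, esym_0. pose proof (abel_partial_0 L).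
    apply (Rmult_eq_reg_l (1 + x)); [|lra].
    rewrite <- Rmult_assoc, (Rmult_comm (1 + x)), Rmult_assoc, Rinv_r, Rmult_1_r by lra. nra.
  - apply CV_mult; [|apply Un_cv_const]. apply CV_minus; [apply CV_minus|].
    + apply CV_plus; [apply Un_cv_const|]. apply CV_mult; [apply Un_cv_const | exact Hphi].
    + apply esym_div_shift_cv0; lia.
    + apply CV_mult; [apply Un_cv_const | apply esym_div_shift_cv0; lia].
Qed.

Lemma eta_partial_succ_cv k w : Un_cv (eta_partial (S k)) w -> exists w' z,
  infinite_sum (fun m => invd x (S m) / INR (S m) ^ S (S k)) z /\
  Un_cv (eta_partial (S (S k))) w' /\ (1 + x) * w' - w = x * z.
Proof.
  intros Hw. destruct (phi_cv (S k)) as [z [Hz Hphi]].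
  exists ((w + x * z - 0 - (1 + x) * 0 + 0) / (1 + x)), z. split; [exact Hz|]. split; [|field; lra].
  apply (Un_cv_ext (fun L => (eta_partial (S k) L + x * phi (S k) L - esym x (S k) L / INR (L + 1)
          - (1 + x) * (esym x (S (S k)) L / INR (L + 2)) + esym x (S k) L / INR (L + 2)) * / (1 + x))).
  - intros L. rewrite !eta_partial_by_parts. pose proof (abel_partial_succ k L).
    apply (Rmult_eq_reg_l (1 + x)); [|lra].
    rewrite <- Rmult_assoc, (Rmult_comm (1 + x)), Rmult_assoc, Rinv_r, Rmult_1_r by lra. nra.
  - apply CV_mult; [|apply Un_cv_const]. apply CV_plus; [apply CV_minus; [apply CV_minus|]|].
    + apply CV_plus; [exact Hw|]. apply CV_mult; [apply Un_cv_const | exact Hphi].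
    + apply esym_div_shift_cv0; lia.
    + apply CV_mult; [apply Un_cv_const | apply esym_div_shift_cv0; lia].
    + apply esym_div_shift_cv0; lia.
Qed.

Lemma eta_partial_cv k : exists w, Un_cv (eta_partial (S k)) w.
Proof.
  induction k as [|k [w Hw]].
  - destruct eta_partial_1_cv as [w [_ [_ [H _]]]]. eauto.
  - destruct (eta_partial_succ_cv k w Hw) as [w' [_ [_ [H _]]]]. eauto.
Qed.

End Duality.

(** * Exchanging the limits *)

Lemma series_monotone_limit (a : nat -> nat -> R) (tot : nat -> R) (l : R) :
  (forall L s, 0 <= a L s) -> (forall L s, a L s <= a (S L) s) ->
  (forall L, infinite_sum (a L) (tot L)) -> Un_cv tot l ->
  exists b, (forall s, Un_cv (fun L => a L s) (b s)) /\ infinite_sum b l.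
Proof.
  intros Hnn Hinc Hs Hl.
  assert (Htot_le : forall L, tot L <= l).
  { apply growing_ineq; [|exact Hl]. intros L.
    eapply Rle_cv_lim; [| apply (Hs L) | apply (Hs (S L))]. intros N. apply sum_Rle; auto. }
  assert (Hb : forall s, {bs | Un_cv (fun L => a L s) bs}).
  { intros s. apply (Un_cv_bounded_growing _ l); [intros L; apply Hinc|].
    intros L. apply Rle_trans with (tot L); [apply infinite_sum_term_le with (a := a L)|]; auto. }
  set (b := fun s => proj1_sig (Hb s)).
  assert (Hcv : forall s, Un_cv (fun L => a L s) (b s)) by (intros; apply proj2_sig).
  exists b. split; [exact Hcv|].
  assert (Hbnn : forall s, 0 <= b s)
    by (intros; eapply Rle_cv_lim; [| apply Un_cv_const | apply Hcv]; intros; simpl; auto).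
  assert (HaL : forall L s, a L s <= b s)
    by (intros; apply (growing_ineq (fun L => a L s)); [intros n; apply Hinc | apply Hcv]).
  assert (Hpb : forall N, sum_f_R0 b N <= l).
  { intros N. apply (Rle_cv_lim (Un := fun L => sum_f_R0 (a L) N) (Vn := fun _ => l)); [| | apply Un_cv_const].
    - intros L. apply Rle_trans with (tot L); [apply sum_incr; [apply Hs | auto] | auto].
    - induction N as [|N IH]; simpl; [apply Hcv | apply CV_plus; auto]. }
  destruct (infinite_sum_bounded b l Hbnn Hpb) as [T HT].
  replace l with T; [exact HT|]. apply Rle_antisym.
  - eapply Rle_cv_lim; [| exact HT | apply Un_cv_const]. intros N; apply Hpb.
  - eapply Rle_cv_lim; [| exact Hl | apply Un_cv_const]. intros L.
    eapply Rle_cv_lim; [| apply (Hs L) | apply Un_cv_const]. intros N.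
    apply Rle_trans with (sum_f_R0 b N); [apply sum_Rle; auto | now apply sum_incr].
Qed.

Fixpoint eta_partial_coeff (k L s : nat) : R :=
  match L with
  | 0 => 0
  | S L' => eta_partial_coeff k L' s + Nsum (s + k) k (S L') / (INR (S L' + 1) * INR (S L' + 2))
  end.

Lemma eta_partial_coeff_nonneg k L s : 0 <= eta_partial_coeff k L s.
Proof.
  induction L as [|L IH]; cbn [eta_partial_coeff]; [lra|]. apply Rplus_le_le_0_compat; [exact IH|].
  apply Rmult_le_pos; [apply Nfrom_nonneg|].
  left. apply Rinv_0_lt_compat, Rmult_lt_0_compat; apply lt_0_INR; lia.
Qed.

Lemma eta_partial_coeff_succ_ge k L s : eta_partial_coeff k L s <= eta_partial_coeff k (S L) s.
Proof.
  cbn [eta_partial_coeff]. assert (0 <= Nsum (s + k) k (S L) / (INR (S L + 1) * INR (S L + 2))).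
  { apply Rmult_le_pos; [apply Nfrom_nonneg|].
    left. apply Rinv_0_lt_compat, Rmult_lt_0_compat; apply lt_0_INR; lia. }
  lra.
Qed.

Lemma Pser_eta_partial x k L : 0 <= x < 1 -> Pser (eta_partial_coeff k L) x (eta_partial x k L).
Proof.
  intros Hx. induction L as [|L IH]; cbn [eta_partial_coeff eta_partial].
  - exact (Pser_zero x).
  - unfold Rdiv. rewrite (Rmult_comm (esym x k (S L))).
    eapply Pser_ext; [| apply Pser_add; [exact IH | apply Pser_scal, Pser_Nsum; exact Hx]].
    intros s. cbv beta. ring.
Qed.

Lemma eta011_is_iff k s l : eta011_is (Nsum (s + k) k) l <-> Un_cv (fun L => eta_partial_coeff k L s) l.
Proof.
  assert (E : forall N, sum_f_R0 (fun j => Nsum (s + k) k (S j) / (INR (S j + 1) * INR (S j + 2))) N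
                        = eta_partial_coeff k (S N) s).
  { induction N as [|N IH]; [simpl; ring | rewrite tech5, IH; reflexivity]. }
  unfold eta011_is. rewrite <- Un_cv_S_iff. split; apply Un_cv_ext; intros N; [|symmetry]; apply E.
Qed.

Lemma eta_exchange k x W : 0 < x <= 1/2 -> Un_cv (eta_partial x k) W ->
  exists b, (forall s, Un_cv (fun L => eta_partial_coeff k L s * x ^ s) (b s)) /\ infinite_sum b W.
Proof.
  intros Hx HW. apply (series_monotone_limit _ (eta_partial x k)); [| | | exact HW].
  - intros. apply Rmult_le_pos; [apply eta_partial_coeff_nonneg | apply pow_le; lra].
  - intros. apply Rmult_le_compat_r; [apply pow_le; lra | apply eta_partial_coeff_succ_ge].
  - intros L. apply Pser_eta_partial. lra.
Qed.

Lemma eta_Nsum_exists k : exists e : nat -> R, forall s, eta011_is (Nsum (s + S k) (S k)) (e s).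
Proof.
  destruct (eta_partial_cv (1/2) ltac:(lra) k) as [W HW].
  destruct (eta_exchange (S k) (1/2) W ltac:(lra) HW) as [b [Hb _]].
  exists (fun s => b s / (1/2) ^ s). intros s. apply eta011_is_iff.
  apply (Un_cv_ext (fun L => eta_partial_coeff (S k) L s * (1/2) ^ s * / (1/2) ^ s)).
  - intros. field. apply pow_nonzero. lra.
  - apply CV_mult; [apply Hb | apply Un_cv_const].
Qed.

Lemma Pser_eta k x e W : 0 < x <= 1/2 -> (forall s, eta011_is (Nsum (s + k) k) (e s)) ->
  Un_cv (eta_partial x k) W -> Pser e x W.
Proof.
  intros Hx He HW. destruct (eta_exchange k x W Hx HW) as [b [Hb HbW]].
  eapply infinite_sum_ext; [| exact HbW]. intros s. eapply UL_sequence; [apply Hb|].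
  apply CV_mult; [apply eta011_is_iff, He | apply Un_cv_const].
Qed.

Lemma eta_Nsum_nonneg k s e : eta011_is (Nsum (s + k) k) e -> 0 <= e.
Proof.
  intros H. apply eta011_is_iff in H. eapply Rle_cv_lim; [| apply Un_cv_const | exact H].
  intros; apply eta_partial_coeff_nonneg.
Qed.

Lemma div_linear_delta0 n s : n <> 0 -> div_linear n delta0 s = / n ^ S s.
Proof.
  intros Hn. induction s as [|s IH]; cbn [div_linear].
  - unfold delta0. simpl. field. exact Hn.
  - rewrite IH. unfold delta0. simpl. field. split; [now apply pow_nonzero | exact Hn].
Qed.

Lemma Pser_zeta_term x m j : 0 <= x <= 1/2 ->
  Pser (fun t => / INR (S m) ^ (j + 2 + t)) x (invd x (S m) / INR (S m) ^ S j).
Proof.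
  intros Hx. assert (1 <= INR (S m)) by (apply (le_INR 1); lia).
  pose proof (Pser_div_linear (INR (S m)) delta0 x 1 ltac:(lra) ltac:(lra)
                (fun s => ltac:(unfold delta0; destruct (Nat.eqb s 0); lra)) (Pser_delta0 x)) as H0.
  apply (Pser_scal (/ INR (S m) ^ S j)) in H0.
  replace (invd x (S m) / INR (S m) ^ S j) with (/ INR (S m) ^ S j * (1 / (INR (S m) - x)))
    by (unfold invd, Rdiv; ring).
  eapply Pser_ext; [| exact H0]. intros t. cbv beta. rewrite div_linear_delta0 by lra.
  replace (j + 2 + t)%nat with (S j + S t)%nat by lia. now rewrite pow_add, Rinv_mult.
Qed.

Lemma zeta_exchange j x Z : 0 < x <= 1/2 ->
  infinite_sum (fun m => invd x (S m) / INR (S m) ^ S j) Z ->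
  exists b, (forall t, Un_cv (fun M => sum_f_R0 (fun m => / INR (S m) ^ (j + 2 + t)) M * x ^ t) (b t))
            /\ infinite_sum b Z.
Proof.
  intros Hx HZ.
  apply (series_monotone_limit _ (fun M => sum_f_R0 (fun m => invd x (S m) / INR (S m) ^ S j) M));
    [| | | exact HZ].
  - intros. apply Rmult_le_pos; [| apply pow_le; lra]. apply cond_pos_sum. intros.
    left. apply Rinv_0_lt_compat, pow_lt, lt_0_INR. lia.
  - intros. apply Rmult_le_compat_r; [apply pow_le; lra|]. rewrite tech5.
    assert (0 < / INR (S (S L)) ^ (j + 2 + s))
      by (apply Rinv_0_lt_compat, pow_lt, lt_0_INR; lia).
    lra.
  - intros M. apply (Pser_sum_f_R0 (fun m t => / INR (S m) ^ (j + 2 + t))). intros m.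
    apply Pser_zeta_term. lra.
Qed.

Lemma zeta_exists j : exists z : nat -> R, forall t, zeta_is (j + 2 + t) (z t).
Proof.
  destruct (phi_cv (1/2) ltac:(lra) j) as [Z [HZ _]].
  destruct (zeta_exchange j (1/2) Z ltac:(lra) HZ) as [b [Hb _]].
  exists (fun t => b t / (1/2) ^ t). intros t.
  apply (Un_cv_ext (fun M => sum_f_R0 (fun m => / INR (S m) ^ (j + 2 + t)) M * (1/2) ^ t * / (1/2) ^ t)).
  - intros. field. apply pow_nonzero. lra.
  - apply CV_mult; [apply Hb | apply Un_cv_const].
Qed.

Lemma Pser_zeta j x z Z : 0 < x <= 1/2 -> (forall t, zeta_is (j + 2 + t) (z t)) ->
  infinite_sum (fun m => invd x (S m) / INR (S m) ^ S j) Z -> Pser z x Z.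
Proof.
  intros Hx Hz HZ. destruct (zeta_exchange j x Z Hx HZ) as [b [Hb HbZ]].
  eapply infinite_sum_ext; [| exact HbZ]. intros t. eapply UL_sequence; [apply Hb|].
  apply CV_mult; [apply Hz | apply Un_cv_const].
Qed.

Lemma zeta_nonneg s z : zeta_is s z -> 0 <= z.
Proof.
  apply infinite_sum_nonneg. intros. left. apply Rinv_0_lt_compat, pow_lt, lt_0_INR. lia.
Qed.

(** * Comparing coefficients *)

Lemma Rabs_le_mult_small y C a :
  0 < a -> (forall x, 0 < x <= a -> Rabs y <= C * x) -> y = 0.
Proof.
  intros Ha H. assert (Hy : Rabs y <= 0).
  { apply (Rle_cv_lim (Un := fun _ => Rabs y) (Vn := fun n => C * (a * / INR (S n))));
      [| apply Un_cv_const |].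
    - intros n. apply H. assert (1 <= INR (S n)) by (apply (le_INR 1); lia).
      split; [apply Rmult_lt_0_compat; [lra | apply Rinv_0_lt_compat; lra]|].
      rewrite <- (Rmult_1_r a) at 2. apply Rmult_le_compat_l; [lra|].
      rewrite <- Rinv_1. apply Rinv_le_contravar; lra.
    - replace 0 with (C * (a * 0)) by ring.
      apply CV_mult; [apply Un_cv_const | apply CV_mult; [apply Un_cv_const | exact Un_cv_inv_succ]]. }
  destruct (Req_dec y 0) as [|Hne]; [assumption|]. pose proof (Rabs_pos_lt y Hne). lra.
Qed.

Lemma geom_sum_le2 q N : 0 <= q <= 1/2 -> sum_f_R0 (fun t => q ^ t) N <= 2.
Proof.
  intros Hq. rewrite tech3 by lra. pose proof (pow_le q (S N) ltac:(lra)).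
  apply Rmult_le_reg_r with (1 - q); [lra|]. unfold Rdiv. rewrite Rmult_assoc, Rinv_l by lra. lra.
Qed.

Lemma pser_tail_bound (d : nat -> R) r B x N : 0 < r -> 0 < x <= r / 2 ->
  (forall t, Rabs (d t) * r ^ t <= B) ->
  Rabs (sum_f_R0 (fun t => d (S t) * x ^ t) N) <= 2 * B / r.
Proof.
  intros Hr Hx HB.
  assert (Habs : forall t, Rabs (d t) <= B / r ^ t).
  { intros t. assert (0 < r ^ t) by (apply pow_lt; lra). apply Rmult_le_reg_r with (r ^ t); auto.
    unfold Rdiv. rewrite Rmult_assoc, Rinv_l, Rmult_1_r by lra. apply HB. }
  apply Rle_trans with (sum_f_R0 (fun t => B / r * (x / r) ^ t) N).
  - apply Rle_trans with (sum_f_R0 (fun t => Rabs (d (S t) * x ^ t)) N); [apply Rsum_abs|].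
    apply sum_Rle. intros t _.
    rewrite Rabs_mult, (Rabs_right (x ^ t)) by (apply Rle_ge, pow_le; lra).
    apply Rle_trans with (B / r ^ S t * x ^ t).
    + apply Rmult_le_compat_r; [apply pow_le; lra | apply Habs].
    + right. simpl pow. unfold Rdiv. rewrite Rpow_mult_distr, pow_inv. field.
      split; [apply pow_nonzero|]; lra.
  - replace (sum_f_R0 (fun t => B / r * (x / r) ^ t) N)
      with (B / r * sum_f_R0 (fun t => (x / r) ^ t) N)
      by (rewrite scal_sum; apply sum_eq; intros; ring).
    replace (2 * B / r) with (B / r * 2) by (field; lra).
    assert (0 <= B) by (specialize (HB 0%nat); pose proof (Rabs_pos (d 0%nat)); simpl in HB; lra).
    apply Rmult_le_compat_l; [apply Rmult_le_pos; [lra | left; apply Rinv_0_lt_compat; lra]|].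
    apply geom_sum_le2. split; [apply Rmult_le_pos; [lra | left; apply Rinv_0_lt_compat; lra]|].
    apply Rmult_le_reg_r with r; [lra|]. unfold Rdiv. rewrite Rmult_assoc, Rinv_l by lra. lra.
Qed.

Lemma pser_zero_head (d : nat -> R) r B : 0 < r -> (forall t, Rabs (d t) * r ^ t <= B) ->
  (forall x, 0 < x <= r -> Pser d x 0) ->
  d 0%nat = 0 /\ (forall x, 0 < x <= r -> Pser (fun t => d (S t)) x 0).
Proof.
  intros Hr HB HS.
  assert (Hdec : forall x N, sum_f_R0 (fun t => d t * x ^ t) (S N) =
                             d 0%nat + x * sum_f_R0 (fun t => d (S t) * x ^ t) N).
  { intros. rewrite sum_f_R0_succ_l, scal_sum. simpl. f_equal; [ring|]. apply sum_eq; intros; ring. }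
  assert (Hd0 : d 0%nat = 0).
  { apply (Rabs_le_mult_small _ (2 * B / r) (r / 2)); [lra|]. intros x Hx.
    apply (Rle_cv_lim (Un := fun _ => Rabs (d 0%nat))
             (Vn := fun N => Rabs (sum_f_R0 (fun t => d t * x ^ t) (S N)) + x * (2 * B / r)));
      [| apply Un_cv_const |].
    - intros N. rewrite Hdec.
      pose proof (pser_tail_bound d r B x N Hr Hx HB) as Ht.
      set (T := sum_f_R0 (fun t => d (S t) * x ^ t) N) in *.
      assert (Rabs (x * T) <= x * (2 * B / r))
        by (rewrite Rabs_mult, Rabs_right by lra; apply Rmult_le_compat_l; lra).
      pose proof (Rabs_triang (d 0%nat + x * T) (- (x * T))) as Htr.
      rewrite Rabs_Ropp in Htr. replace (d 0%nat + x * T + - (x * T)) with (d 0%nat) in Htr by ring.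
      lra.
    - replace (2 * B / r * x) with (Rabs 0 + x * (2 * B / r)) by (rewrite Rabs_R0; ring).
      apply CV_plus; [| apply Un_cv_const]. apply cv_cvabs.
      apply (Un_cv_S_iff (fun N => sum_f_R0 (fun t => d t * x ^ t) N)). apply HS. lra. }
  split; [exact Hd0|]. intros x Hx.
  apply (Un_cv_ext (fun N => / x * sum_f_R0 (fun t => d t * x ^ t) (S N))).
  - intros N. rewrite Hdec, Hd0. field. lra.
  - replace 0 with (/ x * 0) by ring. apply CV_mult; [apply Un_cv_const|].
    apply (Un_cv_S_iff (fun N => sum_f_R0 (fun t => d t * x ^ t) N)). apply HS; exact Hx.
Qed.

Lemma pser_coeffs_zero (c : nat -> R) r B : 0 < r -> (forall t, Rabs (c t) * r ^ t <= B) ->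
  (forall x, 0 < x <= r -> Pser c x 0) -> forall s, c s = 0.
Proof.
  intros Hr HB HS.
  assert (Htails : forall s,
    (forall t, Rabs (c (t + s)%nat) * r ^ t <= B / r ^ s) /\
    (forall x, 0 < x <= r -> Pser (fun t => c (t + s)%nat) x 0)).
  { induction s as [|s [Hb H]].
    - split.
      + intros t. rewrite Nat.add_0_r. simpl. rewrite Rdiv_1_r. apply HB.
      + intros x Hx. apply (Pser_ext c); [intros t; now rewrite Nat.add_0_r | now apply HS].
    - destruct (pser_zero_head _ r _ Hr Hb H) as [_ Htl]. split.
      + intros t. specialize (Hb (S t)). replace (t + S s)%nat with (S (t + s)) by lia.
        assert (0 < r ^ t) by (apply pow_lt; lra).
        apply Rmult_le_reg_r with r; [lra|]. simpl pow in *. unfold Rdiv in *.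
        replace (B * / (r * r ^ s) * r) with (B * / r ^ s)
          by (field; split; [apply pow_nonzero|]; lra).
        rewrite Rmult_assoc, (Rmult_comm _ r). exact Hb.
      + intros x Hx. apply (Pser_ext (fun t => c (S t + s)%nat));
          [intros t; f_equal; lia | now apply Htl]. }
  intros s. destruct (Htails s) as [Hb H]. exact (proj1 (pser_zero_head _ r _ Hr Hb H)).
Qed.

Lemma shift_bound (a : nat -> R) r A : 0 < r <= 1 -> (forall s, 0 <= a s) ->
  infinite_sum (fun s => a s * r ^ s) A -> forall s, 0 <= shift a s /\ shift a s * r ^ s <= A.
Proof.
  intros Hr Ha HA.
  assert (Hterm : forall s, a s * r ^ s <= A).
  { apply (infinite_sum_term_le (fun s => a s * r ^ s)); [|exact HA].
    intros; apply Rmult_le_pos; [apply Ha | apply pow_le; lra]. }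
  intros [|s]; simpl shift.
  - split; [lra|]. rewrite Rmult_0_l. apply Rle_trans with (a 0%nat * r ^ 0); [|apply Hterm].
    apply Rmult_le_pos; [apply Ha | apply pow_le; lra].
  - split; [apply Ha|]. apply Rle_trans with (a s * r ^ s); [|apply Hterm].
    assert (0 <= a s * r ^ s) by (apply Rmult_le_pos; [apply Ha | apply pow_le; lra]).
    simpl pow. replace (a s * (r * r ^ s)) with (r * (a s * r ^ s)) by ring. nra.
Qed.

Lemma coeff_recurrence (p u v : nat -> R) :
  (forall s, 0 <= p s) -> (forall s, 0 <= u s) -> (forall s, 0 <= v s) ->
  (forall x, 0 < x <= 1/2 -> exists P U V,
     Pser p x P /\ Pser u x U /\ Pser v x V /\ (1 + x) * P - U = x * V) ->
  forall s, p s + shift p s - u s - shift v s = 0.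
Proof.
  intros Hp Hu Hv H.
  destruct (H (1/2) ltac:(lra)) as [P [U [V [HP [HU [HV _]]]]]].
  apply (pser_coeffs_zero _ (1/2) (P + P + U + V)); [lra| |].
  - intros t. destruct (shift_bound p (1/2) P ltac:(lra) Hp HP t) as [A1 A2].
    destruct (shift_bound v (1/2) V ltac:(lra) Hv HV t) as [B1 B2].
    assert (C1 : p t * (1/2) ^ t <= P)
      by (apply (infinite_sum_term_le (fun s => p s * (1/2) ^ s)); [intros; apply Rmult_le_pos; [apply Hp | apply pow_le; lra] | exact HP]).
    assert (C2 : u t * (1/2) ^ t <= U)
      by (apply (infinite_sum_term_le (fun s => u s * (1/2) ^ s)); [intros; apply Rmult_le_pos; [apply Hu | apply pow_le; lra] | exact HU]).
    assert (0 < (1/2) ^ t) by (apply pow_lt; lra).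
    pose proof (Hp t). pose proof (Hu t).
    assert (Rabs (p t + shift p t - u t - shift v t) <= p t + shift p t + u t + shift v t)
      by (apply Rabs_le; lra).
    apply Rle_trans with ((p t + shift p t + u t + shift v t) * (1/2) ^ t).
    + apply Rmult_le_compat_r; lra.
    + rewrite !Rmult_plus_distr_r. lra.
  - intros x Hx. destruct (H x Hx) as [P' [U' [V' [G1 [G2 [G3 G4]]]]]].
    replace 0 with (P' + x * P' + -1 * U' + -1 * (x * V')) by lra.
    eapply Pser_ext;
      [| exact (Pser_add _ _ _ _ _ (Pser_add _ _ _ _ _ (Pser_add _ _ _ _ _ G1 (Pser_shift _ _ _ G1))
                                                     (Pser_scal (-1) _ _ _ G2))
                                   (Pser_scal (-1) _ _ _ (Pser_shift _ _ _ G3)))].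
    intros s. cbv beta. ring.
Qed.

Lemma eta_Nsum_col1_coeffs e z :
  (forall s, eta011_is (Nsum (s + 1) 1) (e s)) -> (forall t, zeta_is (0 + 2 + t) (z t)) ->
  forall s, e s + shift e s - delta0 s - shift z s = 0.
Proof.
  intros He Hz. apply coeff_recurrence.
  - intros s. exact (eta_Nsum_nonneg _ _ _ (He s)).
  - intros s. unfold delta0. destruct (Nat.eqb s 0); lra.
  - intros t. exact (zeta_nonneg _ _ (Hz t)).
  - intros x Hx. destruct (eta_partial_1_cv x ltac:(lra)) as [w [Z [HZ [Hw Hrel]]]].
    exists w, 1, Z. split; [|split; [|split]].
    + exact (Pser_eta 1 x e w Hx He Hw).
    + apply Pser_delta0.
    + exact (Pser_zeta 0 x z Z Hx Hz HZ).
    + exact Hrel.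
Qed.

Lemma eta_Nsum_col_succ_coeffs k e' e z :
  (forall s, eta011_is (Nsum (s + S (S k)) (S (S k))) (e' s)) ->
  (forall s, eta011_is (Nsum (s + S k) (S k)) (e s)) ->
  (forall t, zeta_is (S k + 2 + t) (z t)) ->
  forall s, e' s + shift e' s - e s - shift z s = 0.
Proof.
  intros He' He Hz. apply coeff_recurrence.
  - intros s. exact (eta_Nsum_nonneg _ _ _ (He' s)).
  - intros s. exact (eta_Nsum_nonneg _ _ _ (He s)).
  - intros t. exact (zeta_nonneg _ _ (Hz t)).
  - intros x Hx. destruct (eta_partial_cv x ltac:(lra) k) as [w Hw].
    destruct (eta_partial_succ_cv x ltac:(lra) k w Hw) as [w' [Z [HZ [Hw' Hrel]]]].
    exists w', w, Z. split; [|split; [|split]].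
    + exact (Pser_eta _ x e' w' Hx He' Hw').
    + exact (Pser_eta _ x e w Hx He Hw).
    + exact (Pser_zeta _ x z Z Hx Hz HZ).
    + exact Hrel.
Qed.

Lemma eta_Nsum_diag k : eta011_is (Nsum (S k) (S k)) 1.
Proof.
  induction k as [|k IH].
  - destruct (zeta_exists 0) as [z Hz]. destruct (eta_Nsum_exists 0) as [e He].
    pose proof (eta_Nsum_col1_coeffs e z He Hz 0) as R. unfold shift, delta0 in R. simpl in R.
    replace 1 with (e 0%nat) by lra. exact (He 0%nat).
  - destruct (zeta_exists (S k)) as [z Hz]. destruct (eta_Nsum_exists (S k)) as [e He].
    destruct (eta_Nsum_exists k) as [e1 He1].
    pose proof (eta_Nsum_col_succ_coeffs k e e1 z He He1 Hz 0) as R. unfold shift in R.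
    assert (e1 0%nat = 1) by exact (uniqueness_sum _ _ _ (He1 0%nat) IH).
    replace 1 with (e 0%nat) by lra. exact (He 0%nat).
Qed.

Lemma eta_Nsum_col1 n : (2 <= n)%nat -> exists z a : R,
  zeta_is n z /\ eta011_is (Nsum (n - 1) 1) a /\ eta011_is (Nsum n 1) (z - a).
Proof.
  intros Hn. destruct (zeta_exists 0) as [z Hz]. destruct (eta_Nsum_exists 0) as [e He].
  destruct n as [|[|t]]; [lia | lia |]. exists (z t), (e t). split; [|split].
  - exact (Hz t).
  - replace (S (S t) - 1)%nat with (t + 1)%nat by lia. exact (He t).
  - pose proof (eta_Nsum_col1_coeffs e z He Hz (S t)) as R. unfold shift, delta0 in R. simpl in R.
    replace (z t - e t) with (e (S t)) by lra.
    replace (S (S t)) with (S t + 1)%nat by lia. exact (He (S t)).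
Qed.

Lemma eta_Nsum_rec n k : (1 < k < n)%nat -> exists z a b : R,
  zeta_is n z /\ eta011_is (Nsum (n - 1) (k - 1)) a /\ eta011_is (Nsum (n - 1) k) b /\
  eta011_is (Nsum n k) (z + a - b).
Proof.
  intros Hk. destruct k as [|[|k]]; [lia | lia |].
  destruct (zeta_exists (S k)) as [z Hz]. destruct (eta_Nsum_exists (S k)) as [e He].
  destruct (eta_Nsum_exists k) as [e1 He1].
  destruct (Nat.le_exists_sub (S (S (S k))) n ltac:(lia)) as [t [-> _]].
  replace (t + S (S (S k)))%nat with (S t + S (S k))%nat by lia.
  exists (z t), (e1 (S t)), (e t). split; [|split; [|split]].
  - replace (S t + S (S k))%nat with (S k + 2 + t)%nat by lia. exact (Hz t).
  - replace (S t + S (S k) - 1)%nat with (S t + S k)%nat by lia.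
    replace (S (S k) - 1)%nat with (S k) by lia. exact (He1 (S t)).
  - replace (S t + S (S k) - 1)%nat with (t + S (S k))%nat by lia. exact (He t).
  - pose proof (eta_Nsum_col_succ_coeffs k e e1 z He He1 Hz (S t)) as R. unfold shift in R.
    replace (z t + e1 (S t) - e t) with (e (S t)) by lra. exact (He (S t)).
Qed.

Theorem mainTheorem10 :
  (forall n : nat, (1 <= n)%nat -> eta011_is (Nsum n n) 1) /\
  (forall n : nat, (2 <= n)%nat ->
     exists z a : R, zeta_is n z /\ eta011_is (Nsum (n - 1) 1) a /\
                     eta011_is (Nsum n 1) (z - a)) /\
  (forall n k : nat, (2 <= n)%nat -> (1 < k < n)%nat ->
     exists z a b : R, zeta_is n z /\ eta011_is (Nsum (n - 1) (k - 1)) a /\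
                       eta011_is (Nsum (n - 1) k) b /\
                       eta011_is (Nsum n k) (z + a - b)).
Proof.
  split; [|split].
  - intros [|n] Hn; [lia | apply eta_Nsum_diag].
  - exact eta_Nsum_col1.
  - intros n k _. exact (eta_Nsum_rec n k).
Qed.
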